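(* Let $F$ be an algebraically closed field of positive characteristic $p$, and let $\phi \in F(z)$ be a unicritical rational function. Then $\deg(\phi) \equiv 0$ or $1 \pmod p$.
   Context: A rational function $\phi \in F(z)$ is unicritical if it is nonconstant and has exactly one critical point in $\mathbb{P}^1(F)$. Critical points: for $x \in F$, choose a fractional linear transformation $\sigma$ over $F$ with $\sigma(\phi(x)) \neq \infty$; $x$ is a critical point if $\frac{d(\sigma\circ\phi)}{dz}(x) = 0$; $\infty$ is a critical point if $\frac{d(\sigma \circ \phi(1/z))}{dz}\big|_{z=0} = 0$ for such $\sigma$ with $\sigma(\phi(\infty))\neq\infty$. The degree of $\phi = f/g$ with $f,g$ coprime is $\max(\deg f, \deg g)$. *)

From mathcomp Require Import all_boot all_algebra.
Set Implicit Arguments. Unset Strict Implicit. Unset Printing Implicit Defensive.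
Import GRing.Theory.
Local Open Scope ring_scope.

(* A rational function phi = f / g in F(z) is represented by a pair (f, g)
   of polynomials with g != 0 and f, g coprime (hypotheses of the theorem). *)

Section RatFun.
Variable F : fieldType.
Implicit Types (f g P Q : {poly F}) (x a b c d : F).

Definition ratf_deg f g : nat := maxn (size f).-1 (size g).-1.

Definition ratf_const f g : Prop := exists c : F, f = c *: g.

(* z^n p(1/z) for deg p <= n *)
Definition rev_to (n : nat) P : {poly F} := \poly_(i < n.+1) P`_(n - i).

Definition ratf_deriv_at P Q x : F :=
  (P^`() * Q - P * Q^`()).[x] / (Q.[x] ^+ 2).

(* sigma(w) = (a w + b) / (c w + d) is a fractional linear transformation *)
Definition is_fltrans a b c d : bool := a * d - b * c != 0.

(* sigma o (P/Q) = (a P + b Q)/(c P + d Q); sigma(phi(x)) <> oo iff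
   (c P + d Q).[x] != 0 (P, Q have no common zero). *)
Definition crit_with P Q x : Prop :=
  exists a b c d, [/\ is_fltrans a b c d,
    (c *: P + d *: Q).[x] != 0 &
    ratf_deriv_at (a *: P + b *: Q) (c *: P + d *: Q) x = 0].

(* critical points in P^1(F) = option F (None = infinity);
   phi(1/z) = rev_to n f / rev_to n g with n = deg phi *)
Definition ratf_critical f g (pt : option F) : Prop :=
  match pt with
  | Some x => crit_with f g x
  | None => crit_with (rev_to (ratf_deg f g) f) (rev_to (ratf_deg f g) g) 0
  end.

Definition unicritical f g : Prop :=
  ~ ratf_const f g /\
  exists pt : option F, forall q : option F, ratf_critical f g q <-> q = pt.

End RatFun.

From mathcomp Require Import all_boot all_algebra.
From mathcomp Require Import zify ring.

(* The critical points of phi = f/g in F are the zeros of the Wronskian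
   W = f'g - fg', a polynomial of degree at most 2n-2 (n = deg phi), and
   infinity is critical exactly when deg W < 2n-2.  Over an algebraically
   closed field a unicritical phi therefore has W = c (z-a)^k, with k = 2n-2
   if the critical point a is finite and k = 0 if it is infinity.  After
   translating a to 0, W = c z^k gives z W' = k W, which says that the Euler
   operator E = z^2 D^2 - k z D satisfies E(f) g = f E(g).  On polynomials of
   degree <= n, E is the scalar n(n-1) - kn up to lower-degree terms, so for
   the one of f, g of exact degree n, coprimality forces E f = (n(n-1) - kn) f
   and then the same for the other; since E h vanishes at 0 while f and g do
   not both vanish there, n(n-1) - kn = 0.  For both values of k this says
   that p divides n(n-1). *)

Set Implicit Arguments.
Unset Strict Implicit.
Unset Printing Implicit Defensive.
Import GRing.Theory.
Local Open Scope ring_scope.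

Section Products.
Variable R : comNzRingType.
Implicit Types p q : {poly R}.

Lemma coefM_range p q s t i : (size p <= s.+1)%N -> (size q <= t.+1)%N ->
  (maxn s t <= i <= s + t)%N -> (p * q)`_i = \sum_(i - t <= j < s.+1) p`_j * q`_(i - j).
Proof.
move=> /leq_sizeP p_hi /leq_sizeP q_hi /andP[lb ub].
rewrite coefM -(big_mkord xpredT (fun j => p`_j * q`_(i - j))).
rewrite (@big_cat_nat _ _ _ (i - t)) //=; last by lia.
rewrite (@big_cat_nat _ _ _ s.+1 (i - t)) /=; [|lia|lia].
rewrite [X in X + _]big_nat_cond [X in X + _]big1 ?add0r; last first.
  by move=> j /andP[/andP[_ lt_j] _]; rewrite q_hi ?mulr0 //; lia.
rewrite [X in _ + X]big_nat_cond [X in _ + X]big1 ?addr0 //.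
by move=> j /andP[/andP[lt_j _] _]; rewrite p_hi ?mul0r.
Qed.

Lemma coefM_top p q s t : (size p <= s.+1)%N -> (size q <= t.+1)%N ->
  (p * q)`_(s + t) = p`_s * q`_t.
Proof.
move=> sp sq; rewrite (coefM_range sp sq) ?addnK ?big_nat1 ?addKn //; lia.
Qed.

Lemma coefM_subtop p q s t : (size p <= s.+2)%N -> (size q <= t.+2)%N ->
  (p * q)`_(s + t).+1 = p`_s * q`_t.+1 + p`_s.+1 * q`_t.
Proof.
move=> sp sq; rewrite (coefM_range sp sq) ?subSS ?addnK; last by lia.
by rewrite big_nat_recl // big_nat1 subSS addKn -addnS addKn.
Qed.

Lemma size_deriv_le p n : (size p <= n.+1)%N -> (size p^`() <= n)%N.
Proof. by move=> sp; apply: leq_trans (size_poly _ _) _; lia. Qed.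

End Products.

Section Wronskian.
Variable F : fieldType.
Implicit Types (p q h P Q : {poly F}) (a x : F).

Definition wronskian p q := p^`() * q - p * q^`().

Lemma wronskian_swap p q : wronskian q p = - wronskian p q.
Proof. by rewrite /wronskian opprB mulrC [q * _]mulrC. Qed.

Lemma crit_with_swap P Q x : crit_with Q P x -> crit_with P Q x.
Proof.
case=> [a [b [c [d [fl nz_den crit]]]]]; exists b, a, d, c.
split; last by rewrite addrC [d *: _ + _]addrC.
- by rewrite /is_fltrans -oppr_eq0 opprB.
- by rewrite addrC.
Qed.

Lemma crit_with_wronskian P Q x : (P.[x] != 0) || (Q.[x] != 0) ->
  root (wronskian P Q) x -> crit_with P Q x.
Proof.
have crit_id P' Q' : Q'.[x] != 0 -> root (wronskian P' Q') x -> crit_with P' Q' x.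
  move=> nzQ /rootP W0; exists 1, 0, 0, 1; split.
  - by rewrite /is_fltrans mulr1 mul0r subr0 oner_eq0.
  - by rewrite scale0r scale1r add0r.
  - by rewrite /ratf_deriv_at !scale0r !scale1r addr0 add0r W0 mul0r.
have [_|nzQ _] := eqVneq Q.[x] 0; last exact: crit_id.
rewrite orbF => nzP W0; apply/crit_with_swap/crit_id => //.
by rewrite /root wronskian_swap hornerN oppr_eq0.
Qed.

Lemma size_wronskian p q m : (size p <= m.+3)%N -> (size q <= m.+3)%N ->
  (size (wronskian p q) <= (m.*2).+3)%N.
Proof.
move=> sp sq; have sp' := size_deriv_le sp; have sq' := size_deriv_le sq.
apply/leq_sizeP=> j; rewrite leq_eqVlt coefB => /orP[/eqP<- | lt_j].
  rewrite (_ : (m.*2).+3 = m.+1 + m.+2)%N; last by lia.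
  rewrite coefM_top // addnC coefM_top // !coef_deriv.
  by rewrite mulrnAl mulrnAr subrr.
have top_zero (r1 r2 : {poly F}) :
    (size r1 <= m.+2)%N -> (size r2 <= m.+3)%N -> (r1 * r2)`_j = 0.
  move=> s1 s2; apply: nth_default; apply: leq_trans (size_polyMleq _ _) _; lia.
by rewrite top_zero // mulrC top_zero ?subrr.
Qed.

Lemma coef_wronskian_top p q m : (size p <= m.+3)%N -> (size q <= m.+3)%N ->
  (wronskian p q)`_(m.*2).+2 = p`_m.+2 * q`_m.+1 - p`_m.+1 * q`_m.+2.
Proof.
move=> sp sq; have sp' := size_deriv_le sp; have sq' := size_deriv_le sq.
rewrite coefB (_ : (m.*2).+2 = (m + m.+1).+1)%N; last by lia.
rewrite coefM_subtop // addnC coefM_subtop // !coef_deriv !mulrS; ring.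
Qed.

Lemma wronskian_comp_XaddC p q a :
  wronskian (p \Po ('X + a%:P)) (q \Po ('X + a%:P)) = wronskian p q \Po ('X + a%:P).
Proof.
rewrite /wronskian !deriv_comp derivD derivX derivC addr0 !mulr1.
by rewrite comp_polyB !comp_polyM.
Qed.

Definition euler_op (k : nat) h := 'X * ('X * h^`()^`() - h^`() *+ k).

Definition euler_ev (k i : nat) : F := (i * i.-1)%:R - (k * i)%:R.

Lemma coef_euler_op k h i : (euler_op k h)`_i = euler_ev k i * h`_i.
Proof.
rewrite /euler_ev coefXM; case: i => [|i] /=; first by rewrite !muln0 subrr mul0r.
rewrite coefB coefMn coefXM !coef_deriv; case: i => [|i] /=.
  by rewrite !muln0 !mulr1n; ring.
by rewrite mulrBl !mulr_natl !mulrnA [h`_i.+2 *+ k *+ _]mulrnAC.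
Qed.

Lemma root_euler_op0 k h : root (euler_op k h) 0.
Proof. by rewrite /root horner_coef0 coef_euler_op /euler_ev muln0 subrr mul0r. Qed.

Lemma size_euler_op_sub k h n : (size h <= n.+1)%N ->
  (size (euler_op k h - euler_ev k n *: h)%R <= n)%N.
Proof.
move/leq_sizeP=> h_hi; apply/leq_sizeP=> j; rewrite coefB coefZ coef_euler_op.
by rewrite leq_eqVlt => /orP[/eqP<- | lt_nj]; rewrite ?subrr // h_hi // !mulr0 subrr.
Qed.

Lemma euler_op_wronskian k c p q : wronskian p q = c *: 'X^k ->
  euler_op k p * q = p * euler_op k q.
Proof.
move=> W_eq; apply/eqP; rewrite -subr_eq0; apply/eqP.
have euler_W : 'X * (wronskian p q)^`() = wronskian p q *+ k.
  rewrite W_eq derivZ derivXn -scalerAr scalerMnr; congr (_ *: _).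
  by case: (k) => [|k']; rewrite ?mulr0n ?mulr0 // mulrnAr -exprS.
have W' : (wronskian p q)^`() = p^`()^`() * q - p * q^`()^`().
  by rewrite /wronskian derivB !derivM; ring.
transitivity ('X * ('X * (wronskian p q)^`() - wronskian p q *+ k)).
  by rewrite W' /wronskian /euler_op; ring.
by rewrite euler_W subrr mulr0.
Qed.

Lemma euler_op_eigen k n h : size h = n.+1 -> h %| euler_op k h ->
  euler_op k h = euler_ev k n *: h.
Proof.
move=> sh dvd_h; apply/eqP; rewrite -subr_eq0.
apply: contraTT (size_euler_op_sub k (eq_leq sh)) => nz.
by rewrite -ltnNge -sh dvdp_leq // dvdp_sub // -mul_polyC dvdp_mull.
Qed.

Lemma euler_ev_coprime k n f g : coprimep f g ->
  (size f <= n.+1)%N -> (size g <= n.+1)%N -> size f = n.+1 \/ size g = n.+1 ->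
  euler_op k f * g = f * euler_op k g -> euler_ev k n = 0.
Proof.
move=> cop sf sg sfg E; wlog sfn : f g cop sf sg sfg E / size f = n.+1.
  move=> gen; case: (sfg) => [|sgn]; first exact: gen cop sf sg sfg E.
  have := gen g f; rewrite coprimep_sym or_comm mulrC -E mulrC; exact.
set lam := euler_ev k n.
have f0 : f != 0 by rewrite -size_poly_gt0 sfn.
have Ef : euler_op k f = lam *: f.
  by apply: euler_op_eigen sfn _; rewrite -(Gauss_dvdpl _ cop) E dvdp_mulIl.
have Eg : euler_op k g = lam *: g.
  by apply: (mulfI f0); rewrite -E Ef -scalerAl scalerAr.
apply/eqP; apply: contraT => lam0.
have root0 h : euler_op k h = lam *: h -> root h 0.
  by move=> Eh; have := root_euler_op0 k h; rewrite Eh rootZ.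
by move: (coprimep_root cop (root0 f Ef)); rewrite (rootP (root0 g Eg)) eqxx.
Qed.

Lemma wronskian_XsubC_exp_euler_ev f g n c a k : coprimep f g ->
  (size f <= n.+1)%N -> (size g <= n.+1)%N -> size f = n.+1 \/ size g = n.+1 ->
  wronskian f g = c *: ('X - a%:P) ^+ k -> euler_ev k n = 0.
Proof.
move=> cop sf sg sfg W_eq; pose T := 'X + a%:P.
have sT h : size (h \Po T) = size h by rewrite size_comp_poly2 ?size_XaddC.
apply: (@euler_ev_coprime k n (f \Po T) (g \Po T)); rewrite ?sT //.
  exact: coprimep_comp_poly.
apply: (@euler_op_wronskian k c).
by rewrite wronskian_comp_XaddC W_eq comp_polyZ rmorphXn /= comp_polyB comp_polyX comp_polyC addrK.
Qed.

End Wronskian.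

Section RationalFunction.
Variable F : fieldType.
Implicit Types f g : {poly F}.

Lemma ratf_deg_size f g : g != 0 ->
  [/\ (size f <= (ratf_deg f g).+1)%N, (size g <= (ratf_deg f g).+1)%N &
      size f = (ratf_deg f g).+1 \/ size g = (ratf_deg f g).+1].
Proof. by rewrite /ratf_deg -size_poly_gt0 => ?; split; lia. Qed.

Lemma ratf_critical_infty f g n : ratf_deg f g = n.+1 ->
  size f = n.+2 \/ size g = n.+2 -> f`_n * g`_n.+1 = f`_n.+1 * g`_n ->
  ratf_critical f g None.
Proof.
move=> En sfg top; rewrite /= En; apply: crit_with_wronskian.
  rewrite !horner_coef0 !coef_poly /= subn0.
  by case: sfg => s; rewrite -[n.+1]/(n.+2).-1 -s -lead_coefE lead_coef_eq0 -size_poly_gt0 s ?orbT.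
rewrite /root /wronskian !hornerE !horner_coef0 !coef_deriv !coef_poly /=.
by rewrite subn0 subSS subn0 !mulr1n top subrr.
Qed.

End RationalFunction.

Section ClosedField.
Variable F : closedFieldType.
Implicit Types (f g p : {poly F}) (a : F).

Lemma poly_single_root p a : p != 0 -> (forall z, root p z -> z = a) ->
  p = lead_coef p *: ('X - a%:P) ^+ (size p).-1.
Proof.
move=> p0 roots; have [r Er] := closed_field_poly_normal p.
have r_a : all (pred1 a) r.
  apply/allP => z zr; apply/eqP/roots.
  by rewrite Er rootZ ?lead_coef_eq0 // root_prod_XsubC.
have -> : (size p).-1 = size r.
  by rewrite Er size_scale ?lead_coef_eq0 // size_prod_XsubC.
move/all_pred1P: r_a => r_nseq.
by rewrite {1}Er {1}r_nseq big_nseq -Monoid.iteropE.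
Qed.

Lemma unicritical_wronskian f g m : g != 0 -> coprimep f g -> unicritical f g ->
  ratf_deg f g = m.+2 -> exists a c k,
  wronskian f g = c *: ('X - a%:P) ^+ k /\ (k = 0 \/ k = (m.*2).+2)%N.
Proof.
move=> g0 cop [_ [pt crit_pt]] En.
have [sf sg sfg] := ratf_deg_size f g0; rewrite En in sf sg sfg.
set W := wronskian f g.
have root_crit z : root W z -> Some z = pt.
  move=> Wz; apply/crit_pt/crit_with_wronskian => //.
  have [fz|//] := eqVneq f.[z] 0; apply: coprimep_root cop _; exact/eqP.
case: pt crit_pt root_crit => [a|] crit_pt root_crit.
- have top : W`_(m.*2).+2 != 0.
    rewrite coef_wronskian_top // subr_eq0; apply/eqP => top_eq.
    by have /crit_pt := ratf_critical_infty En sfg (esym top_eq).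
  have sW : size W = (m.*2).+3.
    apply/eqP; rewrite eqn_leq size_wronskian // ltnNge.
    by apply: contra top => /leq_sizeP ->.
  exists a, (lead_coef W), (m.*2).+2; split; last by right.
  rewrite (_ : (m.*2).+2 = (size W).-1); last by rewrite sW.
  by apply: poly_single_root => [|z /root_crit []]; rewrite -?size_poly_gt0 ?sW.
have sW : size W = 1%N by apply/eqP; apply: contraT => /closed_rootP [z /root_crit].
exists 0, (lead_coef W), 0%N; split; last by left.
rewrite (_ : 0%N = (size W).-1); last by rewrite sW.
by apply: poly_single_root => [|z /root_crit //]; rewrite -size_poly_gt0 sW.
Qed.

End ClosedField.

Theorem corollary1p3 (F : closedFieldType) (p : nat) (f g : {poly F}) :
  p \in [pchar F] -> g != 0 -> coprimep f g -> unicritical f g ->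
  (ratf_deg f g %% p = 0 \/ ratf_deg f g %% p = 1)%N.
Proof.
move=> charFp g0 cop uf; have p_prime := pcharf_prime charFp.
case En: (ratf_deg f g) => [|[|m]]; first by left; rewrite mod0n.
  by right; rewrite modn_small ?prime_gt1.
have [sf sg sfg] := ratf_deg_size f g0; rewrite En in sf sg sfg.
have [a [c [k [W_eq k_eq]]]] := unicritical_wronskian g0 cop uf En.
have : (m.+2 * m.+1)%:R == 0 :> F.
  have := wronskian_XsubC_exp_euler_ev cop sf sg sfg W_eq; rewrite /euler_ev /=.
  case: k_eq => ->; first by rewrite mul0n subr0 => ->.
  rewrite (_ : ((m.*2).+2 * m.+2 = m.+2 * m.+1 + m.+2 * m.+1)%N); last by lia.
  by rewrite natrD opprD addrA subrr add0r => /eqP; rewrite oppr_eq0.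
rewrite -(dvdn_pcharf charFp) Euclid_dvdM // => /orP[dvd_n | dvd_pred_n].
  by left; apply/eqP.
by right; rewrite -addn1 -modnDml (eqP dvd_pred_n) modn_small ?prime_gt1.
Qed.
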